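(* A connected simple graph $G=(V,E)$ supports at least one set-valued metric if and only if $G$ is bipartite.
   Context: For a connected simple graph $G=(V,E)$ and a set $\Omega$, a set-valued metric on $G$ is a function $\Omega(-,-):V\times V\to 2^{\Omega}$ such that $\Omega(x,y)=\Omega(y,x)$ for all $x,y$; $|\Omega(x,y)|=1$ whenever $\{x,y\}\in E$; and $\Omega(x,z)=\Omega(x,y)\triangle\Omega(y,z)$ for all $x,y,z$, where $\triangle$ is symmetric difference. *)

(* Subsets of an arbitrary set
   Omega are modelled as predicates Omega -> Prop (equality of subsets is
   Leibniz equality of predicates, i.e. extensional via funext/propext). *)
From mathcomp Require Import all_boot.
Set Implicit Arguments. Unset Strict Implicit. Unset Printing Implicit Defensive.

Definition simple_graph (T : finType) (e : rel T) : Prop :=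
  symmetric e /\ irreflexive e.

Definition connected_graph (T : finType) (e : rel T) : Prop :=
  forall x y : T, connect e x y.

Definition bipartite (T : finType) (e : rel T) : Prop :=
  exists c : T -> bool, forall x y, e x y -> c x != c y.

Definition symdiff (Omega : Type) (A B : Omega -> Prop) : Omega -> Prop :=
  fun w => (A w /\ ~ B w) \/ (B w /\ ~ A w).

Definition is_singleton (Omega : Type) (A : Omega -> Prop) : Prop :=
  exists w : Omega, A = (fun v => v = w).

Definition set_valued_metric (T : finType) (e : rel T) (Omega : Type)
    (d : T -> T -> (Omega -> Prop)) : Prop :=
  [/\ (forall x y, d x y = d y x),
      (forall x y, e x y -> is_singleton (d x y)) &
      (forall x y z, d x z = symdiff (d x y) (d y z))].

Definition supports_set_valued_metric (T : finType) (e : rel T) : Prop :=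
  exists (Omega : Type) (d : T -> T -> (Omega -> Prop)),
    set_valued_metric e d.

(* Along any walk from a root r to x, the triangle identity writes d(r, x) as
   the symmetric difference of the singletons labelling the edges. The parity
   of the number of such singletons is an invariant of the set d(r, x): two
   representations of the same set combine into a representation of the empty
   set, and an odd symmetric difference of singletons is never empty. Colouring
   x by this parity is a proper 2-colouring. Conversely, a 2-colouring c gives
   the metric d(x, y) = {* | c x <> c y} on a one-point set. *)
From mathcomp Require Import all_boot.
From Stdlib Require Import Classical FunctionalExtensionality PropExtensionality.

Section SymmetricDifference.
Variable Omega : Type.

Definition emptyset : Omega -> Prop := fun _ => False.

Lemma eq_set (A B : Omega -> Prop) : (forall w, A w <-> B w) -> A = B.
Proof.
by move=> AB; apply: functional_extensionality => w; apply: propositional_extensionality.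
Qed.

Lemma symdiffC (A B : Omega -> Prop) : symdiff A B = symdiff B A.
Proof. by apply: eq_set => w; rewrite /symdiff; tauto. Qed.

Lemma symdiffA (A B C : Omega -> Prop) :
  symdiff A (symdiff B C) = symdiff (symdiff A B) C.
Proof.
apply: eq_set => w; rewrite /symdiff.
by case: (classic (A w)); case: (classic (B w)); case: (classic (C w)); tauto.
Qed.

Lemma symdiff0s (A : Omega -> Prop) : symdiff emptyset A = A.
Proof. by apply: eq_set => w; rewrite /symdiff /emptyset; tauto. Qed.

Lemma symdiffss (A : Omega -> Prop) : symdiff A A = emptyset.
Proof. by apply: eq_set => w; rewrite /symdiff /emptyset; tauto. Qed.

Lemma symdiffKs (A B : Omega -> Prop) : symdiff A (symdiff A B) = B.
Proof. by rewrite symdiffA symdiffss symdiff0s. Qed.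

Definition symdiff_singletons (ws : seq Omega) : Omega -> Prop :=
  foldr (fun w A => symdiff (fun v => v = w) A) emptyset ws.

Local Notation S := symdiff_singletons.

Lemma symdiff_singletons_cat ws1 ws2 : S (ws1 ++ ws2) = symdiff (S ws1) (S ws2).
Proof.
elim: ws1 => [|w ws1 IH] /=; first by rewrite symdiff0s.
by rewrite IH symdiffA.
Qed.

Lemma symdiff_singletons_rem ws a : S ws a ->
  exists ws', size ws = (size ws').+1 /\ S ws = symdiff (fun v => v = a) (S ws').
Proof.
elim: ws => [|b ws IH] //= Sa.
case: (classic (a = b)) => [->|neq_ab]; first by exists ws.
have [|ws' [size_ws ->]] := IH.
  by case: Sa => [[]|[]].
exists (b :: ws'); split; first by rewrite /= size_ws.
by rewrite /= !symdiffA [symdiff (fun v => v = b) _]symdiffC.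
Qed.

Lemma symdiff_singletons_odd ws : odd (size ws) -> exists w, S ws w.
Proof.
have [n] := ubnP (size ws); elim: n ws => // n IH [|a ws] //= size_lt odd_ws.
case: (classic (S ws a)) => [Sa|notSa]; last by exists a; left.
have [ws' [size_ws ->]] := symdiff_singletons_rem _ _ Sa.
rewrite symdiffKs; apply: IH.
  by move: size_lt; rewrite size_ws ltnS => /ltnW.
by move: odd_ws; rewrite size_ws /= negbK.
Qed.

Lemma symdiff_singletons_odd_size ws1 ws2 :
  S ws1 = S ws2 -> odd (size ws1) = odd (size ws2).
Proof.
move=> eq_S; apply/eqP; apply: contraT => neq_odd.
have odd_cat : odd (size (ws1 ++ ws2)).
  by rewrite size_cat oddD; case: (odd _) neq_odd; case: (odd _).
have [w] := symdiff_singletons_odd _ odd_cat.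
by rewrite symdiff_singletons_cat eq_S symdiffss.
Qed.

End SymmetricDifference.

Arguments emptyset {Omega}.
Arguments symdiff_singletons {Omega}.
Arguments symdiff_singletons_odd_size {Omega ws1 ws2}.

Section SetValuedMetric.
Variables (T : finType) (e : rel T) (Omega : Type) (d : T -> T -> (Omega -> Prop)).
Hypothesis d_metric : set_valued_metric e d.

Lemma metric_diag x : d x x = emptyset.
Proof.
by case: d_metric => _ _ d_tri; rewrite {1}(d_tri x x x) symdiffss.
Qed.

Lemma metric_path a p : path e a p ->
  exists ws, d a (last a p) = symdiff_singletons ws.
Proof.
case: d_metric => _ d_edge d_tri.
elim: p a => [|b p IH] a /=; first by exists [::]; rewrite metric_diag.
case/andP=> e_ab /IH [ws d_ws]; have [w d_ab] := d_edge a b e_ab.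
by exists (w :: ws); rewrite (d_tri a b) d_ab d_ws.
Qed.

Lemma bipartite_of_set_valued_metric : connected_graph e -> bipartite e.
Proof.
case: d_metric => _ d_edge d_tri connected.
case: (pickP (@predT T)) => [r _ | T0]; last by exists xpredT => x; have := T0 x.
have /fin_all_exists [ws d_ws] : forall x, exists ws, d r x = symdiff_singletons ws.
  by move=> x; have /connectP [p e_p ->] := connected r x; apply: metric_path.
exists (fun x => odd (size (ws x))) => x y e_xy.
have [w d_xy] := d_edge x y e_xy.
have S_y : symdiff_singletons (ws y) = symdiff_singletons (w :: ws x).
  by rewrite -d_ws (d_tri r x) d_xy d_ws symdiffC.
by rewrite (symdiff_singletons_odd_size S_y) /=; case: (odd _).
Qed.

End SetValuedMetric.

Lemma set_valued_metric_of_bipartite (T : finType) (e : rel T) :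
  bipartite e -> supports_set_valued_metric e.
Proof.
case=> c c_proper; exists unit, (fun x y _ => c x != c y); split.
- by move=> x y; rewrite eq_sym.
- move=> x y /c_proper neq_xy; exists tt.
  by apply: eq_set => -[]; split.
- move=> x y z; apply: eq_set => u; rewrite /symdiff.
  by case: (c x); case: (c y); case: (c z); intuition.
Qed.

Theorem proposition3p4 (T : finType) (e : rel T) :
  simple_graph e -> connected_graph e ->
  (supports_set_valued_metric e <-> bipartite e).
Proof.
move=> _ connected; split; last exact: set_valued_metric_of_bipartite.
by case=> Omega [d d_metric]; exact: bipartite_of_set_valued_metric d_metric connected.
Qed.
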